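(* Let $\Psi=(\psi_{ij})$ and $\Phi=(\phi_{ij})$ be orthogonal quantum Latin squares of order $6$ in standard form. If some entry $\psi_{ij}$ has weight $3$, then every entry $\phi_{kj}$, $k=1,\dots,6$, of the $j$-th column of $\Phi$ has weight $1$ or $2$.
   Context: A quantum Latin square (QLS) of order $n$ is an $n\times n$ matrix $\Psi=(\psi_{ij})_{1\le i,j\le n}$ whose entries are unit vectors in $\mathbb C^n$ such that the entries of each row and the entries of each column form an orthonormal basis of $\mathbb C^n$. Two QLS $\Psi=(\psi_{ij})$ and $\Phi=(\phi_{ij})$ of order $n$ are orthogonal if $\{\psi_{ij}\otimes\phi_{ij}: 1\le i,j\le n\}$ is an orthonormal basis of $\mathbb C^n\otimes\mathbb C^n$. Fix the standard orthonormal basis $\ket{1},\dots,\ket{n}$ of $\mathbb C^n$. The support of a vector $v$ is $\{k:\braket{k}{v}\neq 0\}$ and its weight is the size of its support. A pair $\Psi,\Phi$ is in standard form if $\psi_{1j}=\phi_{1j}=\ket{j}$ for all $j=1,\dots,n$. *)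

From HB Require Import structures.
From mathcomp Require Import all_boot all_order all_algebra.
From mathcomp Require Import complex.
From mathcomp Require Import reals.
Set Implicit Arguments. Unset Strict Implicit. Unset Printing Implicit Defensive.
Import Order.TTheory GRing.Theory Num.Theory.
Local Open Scope ring_scope.

Section QLS.
Variable R : realType.
Local Notation C := (R[i]).

Definition cdot (I : finType) (u v : I -> C) : C :=
  \sum_(k : I) (u k)^* * v k.

Definition orthonormal (I J : finType) (f : J -> I -> C) : Prop :=
  forall a b : J, cdot (f a) (f b) = (a == b)%:R.

Definition is_onb (I J : finType) (f : J -> I -> C) : Prop :=
  #|J| = #|I| /\ orthonormal f.

(* vectors of C^n, coordinates indexed by 'I_n (standard basis |1>..|n>
   corresponds to indices 0..n-1) *)
Definition cvec (n : nat) := 'I_n -> C.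

Definition ket (n : nat) (j : 'I_n) : cvec n := fun k => (k == j)%:R.

Definition tensor (n : nat) (u v : cvec n) : 'I_n * 'I_n -> C :=
  fun p => u p.1 * v p.2.

Definition support (n : nat) (v : cvec n) : {set 'I_n} := [set k | v k != 0].
Definition weight (n : nat) (v : cvec n) : nat := #|support v|.

Definition QLS (n : nat) (Psi : 'I_n -> 'I_n -> cvec n) : Prop :=
  (forall i, is_onb (fun j => Psi i j)) /\ (forall j, is_onb (fun i => Psi i j)).

Definition orthogonal_QLS (n : nat) (Psi Phi : 'I_n -> 'I_n -> cvec n) : Prop :=
  is_onb (fun p : 'I_n * 'I_n => tensor (Psi p.1 p.2) (Phi p.1 p.2)).

Definition standard_form (n : nat) (Psi Phi : 'I_(n.+1) -> 'I_(n.+1) -> cvec n.+1) : Prop :=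
  forall j, Psi ord0 j = ket j /\ Phi ord0 j = ket j.

End QLS.

(* In standard form the first rows of Psi and Phi are |1>, ..., |6>.  Hence in column j
   every other entry of Psi and of Phi is orthogonal to |j>, and orthogonality of
   psi_aj (x) phi_aj to |m> (x) |m> forces psi_aj and phi_aj to have disjoint supports.
   Deleting the first row and the coordinate j thus leaves two 5x5 unitary matrices U and V
   with disjoint supports and the same row weights.  The support pattern of a unitary
   matrix satisfies Hall's condition on rows and on columns, and no two of its rows (or
   columns) meet in exactly one position, since they are orthogonal.  An exhaustive
   backtracking search shows that no two disjoint 5x5 patterns with these properties have a
   row of weight 3 in the first and a row of weight at least 3 in the second. *)

From Pilot Require Import Defs.
From HB Require Import structures.
From mathcomp Require Import all_boot all_order all_algebra.
From mathcomp Require Import complex.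
From mathcomp Require Import reals.
From mathcomp Require Import fingroup perm.
Set Implicit Arguments. Unset Strict Implicit. Unset Printing Implicit Defensive.
Import Order.TTheory GRing.Theory Num.Theory.

Fixpoint bitseqs (n : nat) : seq bitseq :=
  if n is n'.+1 then [seq b :: s | b <- [:: false; true], s <- bitseqs n'] else [:: [::]].

Lemma mem_bitseqs n s : (s \in bitseqs n) = (size s == n).
Proof.
elim: n s => [|n IHn] s; first by case: s.
have -> : bitseqs n.+1 = [seq b :: s | b <- [:: false; true], s <- bitseqs n] by [].
apply/allpairsP/idP => [[[b s'] [_ /= s'_in ->]]|]; first by rewrite eqSS -IHn.
by case: s => // b s; rewrite eqSS -IHn => s_in; exists (b, s); case: b.
Qed.

Lemma count_iota_card n (p : pred nat) : count p (iota 0 n) = #|[pred i : 'I_n | p i]|.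
Proof. by rewrite -val_enum_ord count_map cardE enumT size_filter. Qed.

Lemma has_iota_exists n (p : pred nat) : has p (iota 0 n) = [exists i : 'I_n, p i].
Proof. by rewrite has_count count_iota_card; apply/card_gt0P/existsP => -[x]; exists x. Qed.

(* Patterns are indexed by [nat] rather than by ordinals so that the conditions below
   compute in the VM. *)
Definition pattern_of (rows : seq bitseq) (r m : nat) : bool := nth false (nth [::] rows r) m.

Definition tr_pattern (P : nat -> nat -> bool) : nat -> nat -> bool := fun m r => P r m.

Section PatternConditions.
Variables (n : nat) (P : nat -> nat -> bool).

Definition no_single_overlap :=
  all (fun r1 => all (fun r2 => (r1 != r2) ==>
    (count (fun m => P r1 m && P r2 m) (iota 0 n) != 1)) (iota 0 n)) (iota 0 n).

Definition hall :=
  all (fun s => count (nth false s) (iota 0 n) <=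
     count (fun m => has (fun r => nth false s r && P r m) (iota 0 n)) (iota 0 n))
    (bitseqs n).

Lemma no_single_overlap_card :
  (forall r1 r2 : 'I_n, r1 != r2 -> #|[pred m : 'I_n | P r1 m && P r2 m]| != 1) ->
  no_single_overlap.
Proof.
move=> single; apply/allP => r1; rewrite mem_iota => r1n; apply/allP => r2.
rewrite mem_iota => r2n; apply/implyP => r12; rewrite count_iota_card.
by apply: (single (Ordinal r1n) (Ordinal r2n)).
Qed.

Lemma hall_card :
  (forall S : {set 'I_n}, #|S| <= #|[pred m : 'I_n | [exists r in S, P r m]]|) -> hall.
Proof.
move=> hallS; apply/allP => s _; rewrite !count_iota_card.
have := hallS [set r : 'I_n | nth false s r]; rewrite cardsE.
congr (_ <= _); apply: eq_card => m; rewrite !inE has_iota_exists.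
by apply: eq_existsb => r; rewrite inE.
Qed.

End PatternConditions.

Definition unitary_pattern n P :=
  [&& no_single_overlap n P, no_single_overlap n (tr_pattern P),
      hall n P & hall n (tr_pattern P)].

Section Backtrack.
Variables (T : eqType) (cand : nat -> seq T) (ok : rel T) (leaf : seq T -> bool).

(* [if] rather than [==>]: the VM evaluates both arguments of [implb], so only [if] prunes. *)
Fixpoint backtrack (k : nat) (pre : seq T) : bool :=
  if k is k'.+1 then
    all (fun c => if all (ok^~ c) pre then backtrack k' (rcons pre c) else true)
      (cand (size pre))
  else leaf pre.

Lemma backtrack_cat x0 pre s :
  backtrack (size s) pre -> pairwise ok (pre ++ s) ->
  (forall i, i < size s -> nth x0 s i \in cand (size pre + i)) -> leaf (pre ++ s).
Proof.
elim: s pre => [|c s IHs] pre /=; first by rewrite cats0.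
move=> /allP search pw s_cand; rewrite -cat_rcons.
have c_cand : c \in cand (size pre) by have := s_cand 0; rewrite addn0; apply.
have c_ok : all (ok^~ c) pre.
  by move: pw; rewrite pairwise_cat allrel_consr => /andP[/andP[]].
apply: IHs; first by have := search c c_cand; rewrite c_ok.
  by rewrite cat_rcons.
by move=> i lt_i; rewrite size_rcons addSnnS; apply: (s_cand i.+1).
Qed.

Lemma backtrackP x0 s :
  backtrack (size s) [::] -> pairwise ok s ->
  (forall i, i < size s -> nth x0 s i \in cand i) -> leaf s.
Proof. exact: (@backtrack_cat x0 [::] s). Qed.

End Backtrack.

Lemma perm_two_points (T : finType) (x0 x1 y0 y1 : T) :
  x0 != x1 -> y0 != y1 -> exists s : {perm T}, s x0 = y0 /\ s x1 = y1.
Proof.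
move=> x01 y01; pose p := tperm x0 y0.
have px1 : p x1 != y0 by rewrite -[y0](tpermL x0 y0) (inj_eq perm_inj) eq_sym.
exists (p * tperm (p x1) y1)%g; rewrite !permM; split; last exact: tpermL.
by rewrite tpermL tpermD // eq_sym.
Qed.

Definition row_weight (a : bitseq) := count (nth false a) (iota 0 5).

Definition row_overlap (a b : bitseq) :=
  count (fun m => nth false a m && nth false b m) (iota 0 5).

Definition disjoint_row_pairs : seq (bitseq * bitseq) :=
  [seq ab <- [seq (a, b) | a <- bitseqs 5, b <- bitseqs 5] |
     [&& row_overlap ab.1 ab.2 == 0, 0 < row_weight ab.1 & 0 < row_weight ab.2]].

Definition candidates (rows : seq (bitseq * bitseq)) (i : nat) :=
  if i is 0 then [seq ab <- rows | row_weight ab.1 == 3]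
  else if i is 1 then [seq ab <- rows | 3 <= row_weight ab.2] else rows.

Definition compatible (ab cd : bitseq * bitseq) :=
  (row_overlap ab.1 cd.1 != 1) && (row_overlap ab.2 cd.2 != 1).

(* Row overlaps are already checked during the search; the cheap column test goes first. *)
Definition not_unitary_pair (s : seq (bitseq * bitseq)) :=
  let A := pattern_of (unzip1 s) in let B := pattern_of (unzip2 s) in
  if no_single_overlap 5 (tr_pattern A) && no_single_overlap 5 (tr_pattern B) then
    ~~ [&& hall 5 A, hall 5 (tr_pattern A), hall 5 B & hall 5 (tr_pattern B)]
  else true.

(* [rows] is let-bound so that the VM computes it only once. *)
Lemma disjoint_pattern_search : let rows := disjoint_row_pairs in
  backtrack (candidates rows) compatible not_unitary_pair 5 [::].
Proof. by vm_compute. Qed.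

Lemma no_disjoint_unitary_patterns (A B : seq bitseq) :
  size A = 5 -> size B = 5 -> {in A ++ B, forall a, size a = 5} ->
  unitary_pattern 5 (pattern_of A) -> unitary_pattern 5 (pattern_of B) ->
  (forall r, r < 5 -> [&& row_overlap (nth [::] A r) (nth [::] B r) == 0,
     0 < row_weight (nth [::] A r) & 0 < row_weight (nth [::] B r)]) ->
  row_weight (nth [::] A 0) = 3 -> 3 <= row_weight (nth [::] B 1) -> False.
Proof.
move=> szA szB szAB uA uB AB_rows wA0 wB1.
have /and4P[nsoA nsoAt hA hAt] := uA; have /and4P[nsoB nsoBt hB hBt] := uB.
pose x0 : bitseq * bitseq := ([::], [::]); pose s := zip A B.
have sz_s : size s = 5 by rewrite size_zip szA szB.
have nth_s i : nth x0 s i = (nth [::] A i, nth [::] B i) by rewrite nth_zip ?szA ?szB.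
have : not_unitary_pair s.
  apply: (@backtrackP _ (candidates disjoint_row_pairs) compatible not_unitary_pair x0 s).
  - by rewrite sz_s; exact: disjoint_pattern_search.
  - apply/(pairwiseP x0) => i j; rewrite !inE sz_s => i5 j5 lt_ij; rewrite !nth_s.
    have mem_i5 k : k < 5 -> k \in iota 0 5 by rewrite mem_iota.
    have ne_ij : i != j by rewrite ltn_eqF.
    apply/andP; split.
    + by move/allP/(_ i (mem_i5 i i5))/allP/(_ j (mem_i5 j j5))/implyP: nsoA; apply.
    + by move/allP/(_ i (mem_i5 i i5))/allP/(_ j (mem_i5 j j5))/implyP: nsoB; apply.
  - move=> i; rewrite sz_s nth_s => i5.
    have row_i : (nth [::] A i, nth [::] B i) \in disjoint_row_pairs.
      rewrite mem_filter AB_rows // allpairs_f // mem_bitseqs szAB //.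
      by rewrite mem_cat mem_nth ?szA.
    by rewrite mem_cat mem_nth ?szB ?orbT.
    by case: i i5 row_i => [|[|i]] _ row_i //; rewrite mem_filter row_i ?wA0 ?wB1.
rewrite /not_unitary_pair unzip1_zip ?unzip2_zip ?szA ?szB //.
by rewrite nsoAt nsoBt hA hAt hB hBt.
Qed.

Section Unitary.
Variable R : realType.
Local Notation C := R[i].
Local Open Scope ring_scope.

Lemma orthonormal_tr n (U : 'I_n -> 'I_n -> C) :
  Defs.orthonormal U -> Defs.orthonormal (fun m r => U r m).
Proof.
move=> onU m1 m2.
pose L := \matrix_(r, m) (U r m)^*; pose M := \matrix_(m, r) U r m.
have LM : L *m M = 1%:M.
  by apply/matrixP => r1 r2; rewrite !mxE -onU; apply: eq_bigr => m _; rewrite !mxE.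
move/matrixP: (mulmx1C LM) => /(_ m2 m1); rewrite !mxE eq_sym => <-.
by apply: eq_bigr => r _; rewrite !mxE mulrC.
Qed.

Lemma weight_gt0 n (v : cvec R n) : cdot v v = 1 -> (0 < weight v)%N.
Proof.
move=> vv; rewrite /weight card_gt0; apply: contra_eqN vv => /eqP/setP supp0.
rewrite /cdot big1 ?(eq_sym 0) ?oner_eq0 // => k _.
by have := supp0 k; rewrite !inE => /negbT; rewrite negbK => /eqP ->; rewrite mulr0.
Qed.

Lemma orthogonal_overlap_neq1 (I : finType) (u v : I -> C) :
  cdot u v = 0 -> #|[pred m | (u m != 0) && (v m != 0)]| != 1%N.
Proof.
move=> uv; apply/negP => /card1P[m0 supp].
move: uv; rewrite /cdot (bigD1 m0) //= big1 ?addr0 => [/eqP|m /negbTE m_ne].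
  have := supp m0; rewrite !inE eqxx => /andP[um0 vm0].
  by rewrite mulf_eq0 conjC_eq0 (negbTE um0) (negbTE vm0).
have := supp m; rewrite !inE m_ne => /negbT; rewrite negb_and !negbK.
by case/orP => /eqP ->; rewrite ?conjC0 ?mul0r ?mulr0.
Qed.

Lemma orthonormal_hall (I J : finType) (U : J -> I -> C) :
  Defs.orthonormal U -> Defs.orthonormal (fun m r => U r m) ->
  forall S : {set J}, (#|S| <= #|[pred m | [exists r in S, U r m != 0%R]]|)%N.
Proof.
(* Sum |U r m|^2 over r in S and m in the neighbourhood N of S: row norms give #|S|,
   column norms bound it by #|N|. *)
move=> onU onUt S; set N := [pred m | _].
pose t r m := (U r m)^* * U r m.
have t_ge0 r m : 0 <= t r m by rewrite /t mulrC mul_conjC_ge0.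
have cardS : #|S|%:R = \sum_(r in S) \sum_(m in N) t r m :> C.
  rewrite -sumr_const; apply: eq_bigr => r r_S.
  have := onU r r; rewrite eqxx mulr1n => <-.
  rewrite /cdot (bigID [in N]) /= [X in _ + X]big1 ?addr0 // => m m_N.
  suff -> : U r m = 0 by rewrite mulr0.
  by apply/eqP; apply: contraNT m_N => Urm; apply/existsP; exists r; rewrite r_S.
rewrite -(ler_nat C) cardS exchange_big /= -sumr_const; apply: ler_sum => m _.
have := onUt m m; rewrite eqxx mulr1n => <-.
rewrite /cdot [X in _ <= X](bigID [in S]) /= lerDl.
by apply: sumr_ge0 => r _; exact: t_ge0.
Qed.

Definition support_rows n (U : 'I_n -> 'I_n -> C) : seq bitseq :=
  [seq [seq U r m != 0 | m <- enum 'I_n] | r <- enum 'I_n].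

Lemma nth_support_rows n (U : 'I_n -> 'I_n -> C) (r m : 'I_n) :
  nth false (nth [::] (support_rows U) r) m = (U r m != 0).
Proof.
rewrite (nth_map r) ?size_enum_ord // (nth_map m) ?size_enum_ord //.
by rewrite !fintype.nth_ord_enum.
Qed.

Lemma unitary_support_rows n (U : 'I_n -> 'I_n -> C) :
  Defs.orthonormal U -> unitary_pattern n (pattern_of (support_rows U)).
Proof.
move=> onU; have onUt := orthonormal_tr onU.
apply/and4P; split.
- apply: no_single_overlap_card => r1 r2 r12.
  rewrite (eq_card (B := [pred m | (U r1 m != 0) && (U r2 m != 0)])) => [|m].
    by apply: orthogonal_overlap_neq1; rewrite onU (negbTE r12).
  by rewrite !inE /pattern_of !nth_support_rows.
- apply: no_single_overlap_card => m1 m2 m12.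
  rewrite (eq_card (B := [pred r | (U r m1 != 0) && (U r m2 != 0)])) => [|r].
    by apply: orthogonal_overlap_neq1; rewrite onUt (negbTE m12).
  by rewrite !inE /tr_pattern /pattern_of !nth_support_rows.
- apply: hall_card => S; have := orthonormal_hall onU onUt S.
  congr (_ <= _)%N; apply: eq_card => m; rewrite !inE.
  by apply: eq_existsb => r; rewrite /pattern_of nth_support_rows.
- apply: hall_card => S; have := orthonormal_hall onUt onU S.
  congr (_ <= _)%N; apply: eq_card => r; rewrite !inE.
  by apply: eq_existsb => m; rewrite /tr_pattern /pattern_of nth_support_rows.
Qed.

Lemma weight_disjoint_leq n (u v : cvec R n) :
  (forall m, u m * v m = 0) -> (weight u + weight v <= n)%N.
Proof.
move=> uv; rewrite /weight -cardsUI.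
have -> : Defs.support u :&: Defs.support v = set0.
  by apply/setP => m; rewrite !inE -negb_or -mulf_eq0 uv eqxx.
by rewrite cards0 addn0; apply: leq_trans (max_card _) _; rewrite card_ord.
Qed.

Lemma row_weight_support_rows (U : 'I_5 -> 'I_5 -> C) (r : 'I_5) :
  row_weight (nth [::] (support_rows U) r) = weight (U r).
Proof.
rewrite [row_weight _]count_iota_card /weight; apply: eq_card => m.
by rewrite !inE nth_support_rows.
Qed.

Lemma no_disjoint_unitaries_weight3 (U V : 'I_5 -> 'I_5 -> C) :
  Defs.orthonormal U -> Defs.orthonormal V -> (forall r m, U r m * V r m = 0) ->
  forall r0 r1, weight (U r0) = 3%N -> (3 <= weight (V r1))%N -> False.
Proof.
move=> onU onV UV r0 r1 wU; have [<- wV|r01 wV] := eqVneq r0 r1.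
  by have := leq_trans (leq_add (eq_leq (esym wU)) wV) (weight_disjoint_leq (UV r0)).
(* Move rows r0 and r1 to positions 0 and 1, where the search fixes the weights. *)
have [|s [s0 s1]] := @perm_two_points _ ord0 (inord 1) r0 r1 _ r01.
  by rewrite eq_sym -val_eqE /= inordK.
pose Us r := U (s r); pose Vs r := V (s r).
have onUs : Defs.orthonormal Us by move=> a b; rewrite onU (inj_eq perm_inj).
have onVs : Defs.orthonormal Vs by move=> a b; rewrite onV (inj_eq perm_inj).
apply: (@no_disjoint_unitary_patterns (support_rows Us) (support_rows Vs)).
- by rewrite size_map size_enum_ord.
- by rewrite size_map size_enum_ord.
- by move=> a; rewrite mem_cat => /orP[] /mapP[r _ ->]; rewrite size_map size_enum_ord.
- exact: unitary_support_rows.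
- exact: unitary_support_rows.
- move=> r r5; pose o := Ordinal r5; rewrite -[r]/(val o) !row_weight_support_rows.
  rewrite !weight_gt0 ?onUs ?onVs ?eqxx // !andbT [row_overlap _ _]count_iota_card.
  apply/eqP; apply: eq_card0 => m.
  by rewrite !inE !nth_support_rows -negb_or -mulf_eq0 UV eqxx.
- by have := row_weight_support_rows Us ord0; rewrite /Us s0 wU.
- by have := row_weight_support_rows Vs (inord 1); rewrite inordK // /Vs s1 => ->.
Qed.

Lemma cdot_ket n (j : 'I_n) (v : cvec R n) : cdot (ket R j) v = v j.
Proof.
rewrite /cdot (bigD1 j) //= big1 ?addr0 => [|k /negbTE kj].
  by rewrite /ket eqxx conjC1 mul1r.
by rewrite /ket kj conjC0 mul0r.
Qed.

Lemma weight_ket n (j : 'I_n) : weight (ket R j) = 1%N.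
Proof.
rewrite /weight (_ : Defs.support _ = [set j]) ?cards1 //; apply/setP => k.
by rewrite !inE /ket pnatr_eq0 eqb0 negbK.
Qed.

Lemma weight_lift n (v : cvec R n.+1) (j : 'I_n.+1) :
  v j = 0 -> weight (fun m => v (lift j m)) = weight v.
Proof.
move=> vj; rewrite /weight -(card_imset _ (@lift_inj _ j)); apply: eq_card => k.
rewrite [in RHS]inE; case: (unliftP j k) => [m ->|->].
  by rewrite mem_imset ?inE //; exact: lift_inj.
by rewrite vj eqxx; apply/imsetP => -[m _ /eqP]; rewrite (negbTE (neq_lift _ _)).
Qed.

Section StandardColumn.
Variables (n : nat) (F : 'I_n.+1 -> 'I_n.+1 -> cvec R n.+1) (j : 'I_n.+1).
Hypotheses (onbF : is_onb (fun i => F i j)) (F0 : F ord0 j = ket R j).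

Lemma standard_column_entry a : a != ord0 -> F a j j = 0.
Proof. by move=> a0; have := onbF.2 ord0 a; rewrite /= F0 cdot_ket eq_sym (negbTE a0). Qed.

Definition column_block : 'I_n -> 'I_n -> C := fun c m => F (lift ord0 c) j (lift j m).

Lemma orthonormal_column_block : Defs.orthonormal column_block.
Proof.
move=> c1 c2; have := onbF.2 (lift ord0 c1) (lift ord0 c2).
rewrite /= /cdot (bigD1_ord j) //= standard_column_entry ?neq_lift //.
by rewrite conjC0 mul0r add0r (inj_eq (@lift_inj _ ord0)).
Qed.

Lemma weight_column_block c : weight (column_block c) = weight (F (lift ord0 c) j).
Proof. by apply: weight_lift; rewrite standard_column_entry ?neq_lift. Qed.

End StandardColumn.

Lemma orthogonal_QLS_disjoint n (Psi Phi : 'I_n.+1 -> 'I_n.+1 -> cvec R n.+1) :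
  orthogonal_QLS Psi Phi -> standard_form Psi Phi ->
  forall a b m, a != ord0 -> Psi a b m * Phi a b m = 0.
Proof.
move=> [_ onPP] std a b m a0; have := onPP (ord0, m) (a, b).
rewrite /= xpair_eqE eq_sym (negbTE a0) /=; case: (std m) => -> ->.
rewrite /cdot (bigD1 (m, m)) //= big1 ?addr0 => [|[x y] /=].
  by rewrite /tensor /ket /= eqxx mulr1 conjC1 mul1r.
rewrite xpair_eqE negb_and /tensor /ket /= => /orP[] /negbTE ->.
  by rewrite mul0r conjC0 mul0r.
by rewrite mulr0 conjC0 mul0r.
Qed.

End Unitary.

Theorem mainTheorem7 (R : realType) (Psi Phi : 'I_6 -> 'I_6 -> cvec R 6) :
  QLS Psi -> QLS Phi -> orthogonal_QLS Psi Phi -> standard_form Psi Phi ->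
  forall i j : 'I_6, weight (Psi i j) = 3%N ->
  forall k : 'I_6, (weight (Phi k j) = 1%N \/ weight (Phi k j) = 2%N).
Proof.
move=> [_ colPsi] [_ colPhi] orth std i j wPsi k.
have Psi0 : Psi ord0 j = ket R j by case: (std j).
have Phi0 : Phi ord0 j = ket R j by case: (std j).
case: (unliftP ord0 i) wPsi => [ci ->|->]; last by rewrite Psi0 weight_ket.
case: (unliftP ord0 k) => [ck ->|->] wPsi; last by left; rewrite Phi0 weight_ket.
have wPhi_gt0 : (0 < weight (Phi (lift ord0 ck) j))%N.
  by apply: weight_gt0; rewrite (colPhi j).2 eqxx.
have wPhi_le2 : (weight (Phi (lift ord0 ck) j) <= 2)%N.
  rewrite leqNgt; apply/negP => wPhi.
  apply: (@no_disjoint_unitaries_weight3 _ (column_block Psi j) (column_block Phi j)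
           _ _ _ ci ck).
  - exact: orthonormal_column_block.
  - exact: orthonormal_column_block.
  - by move=> c m; apply: (orthogonal_QLS_disjoint orth std); rewrite eq_sym neq_lift.
  - by rewrite weight_column_block.
  - by rewrite weight_column_block.
move: wPhi_gt0 wPhi_le2.
by case: (weight _) => [|[|[|]]] //; [left | right].
Qed.
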